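(* Let $q$ be a prime power and let $n,k,\delta,\alpha$ be positive integers with $k\le n$, $\alpha\ge 2$ and $\delta\le(\alpha-1)k$. Put $h=\left\lfloor k+1-\frac{\delta}{\alpha-1}\right\rfloor$. Then $$B_q(n,k,\delta;\alpha)\le(\alpha-1)\frac{\left[{n\atop h}\right]_q}{\left[{k\atop h}\right]_q}.$$
   Context: For a prime power $q$, $\mathcal{G}_q(n,k)$ denotes the set of all $k$-dimensional subspaces of $\mathbb{F}_q^n$, and the Gaussian binomial coefficient is $\left[{n\atop k}\right]_q=\prod_{i=0}^{k-1}\frac{q^n-q^i}{q^k-q^i}=|\mathcal{G}_q(n,k)|$. An $\alpha$-$(n,k,\delta)_q^c$ covering Grassmannian code is a subset $\mathcal{C}\subseteq\mathcal{G}_q(n,k)$ (no repeated codewords) such that every set of $\alpha$ distinct codewords of $\mathcal{C}$ spans a subspace of $\mathbb{F}_q^n$ of dimension at least $k+\delta$. $B_q(n,k,\delta;\alpha)$ denotes the maximum size of an $\alpha$-$(n,k,\delta)_q^c$ code. *)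

From HB Require Import structures.
From mathcomp Require Import all_boot all_order all_algebra.
Unset Printing Implicit Defensive.
Import Order.TTheory GRing.Theory Num.Theory.
Local Open Scope ring_scope.

Definition gauss_binom (q n k : nat) : rat :=
  \prod_(i < k) (((q ^ n)%:R - (q ^ i)%:R) / ((q ^ k)%:R - (q ^ i)%:R)).

(* An alpha-(n,k,delta)_q^c covering Grassmannian code over the finite field F
   (q = #|F|), given as a duplicate-free list C of subspaces of F^n = 'rV[F]_n:
   every codeword has dimension k, and every alpha distinct codewords span a
   subspace of dimension at least k + delta. *)
Definition covering_code (F : finFieldType) (n k delta alpha : nat)
    (C : seq {vspace 'rV[F]_n}) : Prop :=
  uniq C /\
  (forall V, V \in C -> \dim V = k) /\
  (forall S : seq {vspace 'rV[F]_n}, uniq S -> size S = alpha ->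
     {subset S <= C} -> (k + delta <= \dim (\sum_(V <- S) V)%VS)%N).

Definition h_param (k delta alpha : nat) : nat :=
  `|Num.floor ((k%:R + 1 - delta%:R / (alpha%:R - 1)) : rat)|%N.

From HB Require Import structures.
From mathcomp Require Import all_boot all_order all_algebra.
From mathcomp Require Import zify lra.
Import Order.TTheory GRing.Theory Num.Theory.
Import VectorInternalTheory.

Set Implicit Arguments.
Unset Strict Implicit.

(* Double counting of h-frames, i.e. of linearly independent h-tuples of
   vectors.  A k-dimensional codeword contains (q^k - 1)(q^k - q)...(q^k - q^(h-1))
   of them and the whole space (q^n - 1)...(q^n - q^(h-1)), and the ratio of these
   two counts is the ratio of Gaussian binomials.  An h-frame lies in at most
   alpha - 1 codewords: alpha codewords through a common h-space span at most
   h + alpha (k - h) = k + (alpha - 1)(k - h) dimensions, and the choice of h is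
   exactly what makes this smaller than k + delta. *)

Lemma sum_card_le_mul (I T : finType) (U : {set T}) (A : I -> {set T}) a :
  (forall i, A i \subset U) ->
  (forall x, x \in U -> #|[set i | x \in A i]| <= a) ->
  \sum_i #|A i| <= a * #|U|.
Proof.
move=> sAU covU.
have -> : \sum_i #|A i| = \sum_(x in U) #|[set i | x \in A i]|.
  transitivity (\sum_i \sum_(x in U | x \in A i) 1).
    apply: eq_bigr => i _; rewrite -sum1_card; apply: eq_bigl => x.
    by rewrite andb_idl // => /(subsetP (sAU i)).
  rewrite (exchange_big_dep (fun x => x \in U)) /=; last by move=> i x _ /andP[].
  apply: eq_bigr => x xU; rewrite -sum1_card.
  by apply: eq_bigl => i; rewrite inE xU.
by rewrite mulnC -sum_nat_const; apply: leq_sum.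
Qed.

Definition frame_count (q m h : nat) : nat := \prod_(j < h) (q ^ m - q ^ j).

Lemma frame_count_gt0 q m h : 1 < q -> h <= m -> 0 < frame_count q m h.
Proof.
move=> q_gt1 hm; apply: prodn_gt0 => j.
by rewrite subn_gt0 ltn_exp2l // (leq_trans _ hm).
Qed.

Section Frames.
Variable F : finFieldType.
Local Notation q := #|F|.

Lemma card_submx_row n m (A : 'M[F]_(m, n)) :
  #|[set u : 'rV[F]_n | (u <= A)%MS]| = q ^ \rank A.
Proof.
rewrite -[\rank A]mul1n -card_mx.
have injA : injective (mulmxr (row_base A)).
  have /row_freeP[A' A'K] := row_base_free A.
  by move=> ?; apply: can_inj (mulmxr A') _ => u; rewrite /= -mulmxA A'K mulmx1.
rewrite -(card_image (injA _)); apply: eq_card => v.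
by rewrite inE -(eq_row_base A) (sameP submxP codomP).
Qed.

Definition frames n h r (U : 'M[F]_(r, n)) : {set 'M[F]_(h, n)} :=
  [set A | row_free A && (A <= U)%MS].

Lemma frames_dsubmx n h r (U : 'M[F]_(r, n)) (A : 'M[F]_(1 + h, n)) :
  A \in frames (1 + h) U -> dsubmx A \in frames h U.
Proof.
rewrite !inE /row_free -{1 2}(vsubmxK A) col_mx_sub => /andP[/eqP rA /andP[_ ->]].
rewrite andbT eqn_leq rank_leq_row -(leq_add2l 1) -rA.
have [+ _] := mxrank_adds_leqif (usubmx A) (dsubmx A).
by rewrite addsmxE => /leq_trans; apply; rewrite leq_add2r rank_leq_row.
Qed.

Lemma col_mx_frames n h r (U : 'M[F]_(r, n)) (v : 'rV[F]_n) (A : 'M[F]_(h, n)) :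
  A \in frames h U ->
  (col_mx v A \in frames (1 + h) U) = (v <= U)%MS && ~~ (v <= A)%MS.
Proof.
rewrite !inE /row_free col_mx_sub => /andP[/eqP rA ->]; rewrite andbT andbC.
congr (_ && _); rewrite eqn_leq rank_leq_row /=.
have -> : \rank (col_mx v A) = \rank (v + A)%MS by rewrite addsmxE.
rewrite -(leq_add2r (\rank (v :&: A)%MS)) mxrank_sum_cap rA addnAC leq_add2r add1n.
by rewrite (ltn_leqif (mxrank_leqif_sup _)) ?capmxSl // sub_capmx submx_refl.
Qed.

Lemma card_frames n h r (U : 'M[F]_(r, n)) :
  #|frames h U| = frame_count q (\rank U) h.
Proof.
elim: h => [|h IHh].
  rewrite /frame_count big_ord0 (@eq_card1 _ (0%R : 'M_(0, n))) // => A.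
  by rewrite !inE [A]flatmx0 /row_free mxrank0 sub0mx !eqxx.
rewrite /frame_count big_ord_recr /= -/(frame_count _ _ _) -IHh -sum_nat_const.
rewrite -sum1_card (partition_big (fun A : 'M_(1 + h, n) => dsubmx A)
  (mem (frames h U))) /=; last exact: frames_dsubmx.
apply: eq_bigr => A fA; rewrite (reindex (col_mx^~ A)) /=; last first.
  exists usubmx => [v _ | B]; first by rewrite col_mxKu.
  by case/andP=> _ /eqP <-; rewrite vsubmxK.
transitivity #|[set u : 'rV[F]_n | (u <= U)%MS] :\: [set u : 'rV[F]_n | (u <= A)%MS]|.
  rewrite -sum1_card; apply: eq_bigl => v.
  by rewrite col_mxKd eqxx andbT col_mx_frames // !inE andbC.
have sAU : (A <= U)%MS by move: fA; rewrite inE => /andP[].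
have /eqP rA : row_free A by move: fA; rewrite inE => /andP[].
rewrite cardsD (card_submx_row U) (setIidPr _) ?(card_submx_row A) ?rA //.
by apply/subsetP => u; rewrite !inE => /submx_trans; apply.
Qed.

End Frames.

Lemma dimv_sum_through_le (K : fieldType) (vT : vectType K) (W : {vspace vT}) k
    (S : seq {vspace vT}) :
  (forall V, V \in S -> (W <= V)%VS /\ \dim V <= k) ->
  \dim (W + \sum_(V <- S) V)%VS <= \dim W + size S * (k - \dim W).
Proof.
elim: S => [|V S IHS] sWS; first by rewrite big_nil addv0 mul0n addn0.
have [sWV dimV] := sWS V (mem_head _ _).
have := IHS (fun X SX => sWS X (mem_behead (s := V :: S) SX)).
rewrite big_cons addvA (addvC W V) -addvA -[size (V :: S)]/(size S).+1 mulSn.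
set X := (W + _)%VS => dimX.
have := dimv_sum_cap V X.
have : \dim W <= \dim (V :&: X) by apply: dimvS; rewrite subv_cap sWV addvSl.
have : \dim W <= \dim V by apply: dimvS.
lia.
Qed.

Section CoveringCode.
Variables (F : finFieldType) (n k delta alpha : nat).
Variable C : seq {vspace 'rV[F]_n}.
Hypotheses (codeC : covering_code F n k delta alpha C) (alpha_gt0 : 0 < alpha).

Lemma covering_code_through_lt (W : {vspace 'rV[F]_n}) :
  (alpha - 1) * (k - \dim W) < delta ->
  #|[set i : 'I_(size C) | (W <= nth 0%VS C i)%VS]| < alpha.
Proof.
have [uniqC [dimC spanC]] := codeC.
move=> gap; rewrite ltnNge; apply/negP => alpha_le.
set I := [set i | _] in alpha_le.
pose S := [seq nth 0%VS C i | i : 'I_(size C) <- take alpha (enum I)].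
have sizeS : size S = alpha by rewrite size_map size_takel // -cardE.
have sWS X : X \in S -> (W <= X)%VS /\ \dim X <= k.
  case/mapP=> i /mem_take; rewrite mem_enum inE => sWi ->.
  by rewrite dimC ?mem_nth.
have uniqS : uniq S.
  rewrite map_inj_uniq ?take_uniq ?enum_uniq // => i j /eqP.
  by rewrite nth_uniq // => /eqP /val_inj.
have sSC : {subset S <= C} by move=> X /mapP[i _ ->]; rewrite mem_nth.
have dimWk : \dim W <= k.
  have [|/dimvS sWX dimX] := sWS (nth 0%VS S 0) (mem_nth _ _); first by rewrite sizeS.
  exact: leq_trans dimX.
have := spanC S uniqS sizeS sSC.
have := dimvS (addvSr W (\sum_(X <- S) X)).
have := dimv_sum_through_le sWS; rewrite sizeS.
nia.
Qed.

Lemma covering_code_frame_count h :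
  (alpha - 1) * (k - h) < delta ->
  size C * frame_count #|F| k h <= (alpha - 1) * frame_count #|F| n h.
Proof.
move=> gap; have [_ [dimC _]] := codeC.
pose V i := vs2mx (nth 0%VS C i).
have cardV (i : 'I_(size C)) : #|frames h (V i)| = frame_count #|F| k h.
  by rewrite card_frames -[\rank _]/(\dim _) dimC ?mem_nth.
have cardU : #|frames h (1%:M : 'M[F]_(dim 'rV[F]_n))| = frame_count #|F| n h.
  by rewrite card_frames mxrank1 dim_matrix mul1r.
rewrite -cardU -[size C]card_ord -sum_nat_const -(eq_bigr _ (fun i _ => cardV i)).
apply: sum_card_le_mul => [i | A].
  by apply/subsetP => A; rewrite !inE submx1 andbT => /andP[].
rewrite inE => /andP[freeA _].
have dimA : \dim (mx2vs A : {vspace 'rV[F]_n}) = h by rewrite /dimv mx2vsK (eqP freeA).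
rewrite subn1 -ltnS prednK //.
have := covering_code_through_lt (W := mx2vs A); rewrite dimA => /(_ gap).
congr (_ < _); apply: eq_card => i.
by rewrite !inE freeA /subsetv mx2vsK.
Qed.

End CoveringCode.

Local Open Scope ring_scope.

Lemma gauss_binom_frame_count q m h : (0 < q)%N -> (h <= m)%N ->
  gauss_binom q m h = (frame_count q m h)%:R / (frame_count q h h)%:R.
Proof.
move=> q_gt0 hm; rewrite /gauss_binom big_split /= prodfV !natr_prod.
have le_pow (j : 'I_h) p : (h <= p)%N -> (q ^ j <= q ^ p)%N.
  by move=> hp; rewrite leq_pexp2l // (leq_trans (ltnW (ltn_ord j))).
by congr (_ / _); apply: eq_bigr => j _; rewrite natrB ?le_pow.
Qed.

Lemma gauss_binom_ratio q n k h : (1 < q)%N -> (h <= k)%N -> (k <= n)%N ->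
  gauss_binom q n h / gauss_binom q k h =
  (frame_count q n h)%:R / (frame_count q k h)%:R.
Proof.
move=> q_gt1 hk kn; have q_gt0 := ltnW q_gt1.
rewrite !gauss_binom_frame_count ?(leq_trans hk) // invf_div mulrA divfK //.
by rewrite pnatr_eq0 -lt0n frame_count_gt0.
Qed.

Lemma h_param_spec k delta alpha : (0 < delta)%N -> (2 <= alpha)%N ->
    (delta <= (alpha - 1) * k)%N ->
  (h_param k delta alpha <= k)%N /\
  ((alpha - 1) * (k - h_param k delta alpha) < delta)%N.
Proof.
move=> delta_gt0 alpha_gt1 delta_le.
set h := h_param k delta alpha; set a := (alpha - 1)%N.
have a_gt0 : (0 : rat) < a%:R by rewrite ltr0n subn_gt0.
set y : rat := delta%:R / a%:R.
have yE : y * a%:R = delta%:R by rewrite divfK ?gt_eqF.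
have y_gt0 : 0 < y by rewrite -(ltr_pM2r a_gt0) yE mul0r ltr0n.
have y_le : y <= k%:R by rewrite -(ler_pM2r a_gt0) yE -natrM ler_nat mulnC.
have floorE : Num.floor (k%:R + 1 - y) = h%:Z.
  rewrite /h /h_param -(natrB _ (ltnW alpha_gt1)) -/a -/y gez0_abs //.
  by rewrite floor_ge_int /= subr_ge0 (le_trans y_le) ?lerDl.
have := floor_le (k%:R + 1 - y); have := floorD1_gt (k%:R + 1 - y).
rewrite floorE intrD -[(h%:Z)%:~R]/(h%:R : rat) => lt_h1 le_h.
have h_le : (h <= k)%N by rewrite -ltnS -(ltr_nat rat) -natr1; lra.
split=> //; rewrite -(ltr_nat rat) natrM (natrB _ h_le) -yE.
by rewrite mulrC ltr_pM2r //; lra.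
Qed.

Theorem mainTheorem1 (F : finFieldType) (n k delta alpha : nat)
    (hn : (0 < n)%N) (hk : (0 < k)%N) (hd : (0 < delta)%N)
    (hkn : (k <= n)%N) (ha : (2 <= alpha)%N)
    (hda : (delta <= (alpha - 1) * k)%N)
    (C : seq {vspace 'rV[F]_n}) :
  covering_code F n k delta alpha C ->
  (size C)%:R <= (alpha%:R - 1) *
     (gauss_binom #|F| n (h_param k delta alpha) /
      gauss_binom #|F| k (h_param k delta alpha)) :> rat.
Proof.
move=> codeC; have [hk_le gap] := h_param_spec hd ha hda.
have q_gt1 : (1 < #|F|)%N := card_finNzRing_gt1 F.
rewrite gauss_binom_ratio // -(natrB _ (ltnW ha)) mulrA.
rewrite ler_pdivlMr ?ltr0n ?frame_count_gt0 // -!natrM ler_nat.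
exact: (covering_code_frame_count codeC (ltnW ha) gap).
Qed.
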